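(* Let $D\in(0,1]$ and define $\mathcal F_{\bm B}:=\{r_2\in[\underline x,\bar x]:(\bm R\bm c^m)^\top G_{\bm B}(r_2)\le D\}$, $\mathcal F_{\bm A}:=\{(r_1,r_3,p)\in F:(\bm R\bm c^m)^\top G_{\bm A}(r_1,r_3,p)\le D\}$, $\vartheta_{\bm B}:=\max\{(\bm R\bm v_1^m)^\top G_{\bm B}(r_2):r_2\in\mathcal F_{\bm B}\}$, $\vartheta_{\bm A}:=\max\{(\bm R\bm v_2^m)^\top G_{\bm A}(r_1,r_3,p):(r_1,r_3,p)\in\mathcal F_{\bm A}\}$, $\mathcal S_{\bm B}:=\{r_2\in\mathcal F_{\bm B}:(\bm R\bm v_1^m)^\top G_{\bm B}(r_2)=\vartheta_{\bm B}\}$, $\mathcal S_{\bm A}:=\{(r_1,r_3,p)\in\mathcal F_{\bm A}:(\bm R\bm v_2^m)^\top G_{\bm A}(r_1,r_3,p)=\vartheta_{\bm A}\}$, $\mathcal F_{\bm B}^{=}:=\{r_2\in[\underline x,\bar x]:(\bm R\bm c^m)^\top G_{\bm B}(r_2)=D\}$ and $\mathcal F_{\bm A}^{=}:=\{(r_1,r_3,p)\in F:(\bm R\bm c^m)^\top G_{\bm A}(r_1,r_3,p)=D\}$. Then for every $(r_1^m,r_3^m,p^m)\in\mathcal S_{\bm A}\cap\mathcal F_{\bm A}^{=}$ and every $r_2^m\in\mathcal S_{\bm B}\cap\mathcal F_{\bm B}^{=}$ we have $r_1^m\le r_2^m\le r_3^m$.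
   Context: Let $N\ge3$ be an integer and $\underline x=x_1<x_2<\cdots<x_N=\bar x$ real numbers; $\bm e$ denotes the all-ones vector of the appropriate dimension. Define $\bm g:[\underline x,\bar x]\to\mathbb R^{N-1}$ by $\bm g(x_1)=\bm 0$ and, for $x\in(x_i,x_{i+1}]$ ($i\in\{1,\dots,N-1\}$), $\bm g(x)=(1,\dots,1,\frac{x-x_i}{x_{i+1}-x_i},0,\dots,0)$ with the first $i-1$ entries equal to $1$, the $i$-th entry $\frac{x-x_i}{x_{i+1}-x_i}$ and the last $N-1-i$ entries $0$. For $\bm v\in\mathbb R^{N-2}$ let $\bm R\bm v:=(v_1,\dots,v_{N-2},1-\bm e^\top\bm v)\in\mathbb R^{N-1}$. Define $G_{\bm A}(r_1,r_3,p):=(1-p)\bm g(r_1)+p\,\bm g(r_3)$, $G_{\bm B}(r_2):=\bm g(r_2)$, and $F:=\{(r_1,r_3,p)\in[\underline x,\bar x]\times[\underline x,\bar x]\times[0,1]: r_1\le r_3\}$. Fix $m\ge1$ and data $(r_1^k,r_3^k,p^k)\in F$, $r_2^k\in[\underline x,\bar x]$, $l_k\in\{-1,1\}$ for $k=1,\dots,m-1$. Let $\mathcal V^{m-1}:=\{\bm v\in\mathbb R^{N-2}: v_i\ge0\ (i=1,\dots,N-2),\ \bm e^\top\bm v\le1,\ l_k(\bm R\bm v)^\top(G_{\bm A}(r_1^k,r_3^k,p^k)-G_{\bm B}(r_2^k))\le0\ (k=1,\dots,m-1)\}$, assumed to have nonempty interior; write its defining inequalities as $\tilde{\bm a}_i^\top\bm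 v\le\tilde b_i$. Let $\bm c^m$ be its analytic center, i.e. the maximizer over the interior of $\mathcal V^{m-1}$ of $\sum_i\log(\tilde b_i-\tilde{\bm a}_i^\top\bm v)$; in particular $c^m_i>0$ for all $i$ and $1-\bm e^\top\bm c^m>0$. Let $\bm H:=\sum_i\tilde{\bm a}_i\tilde{\bm a}_i^\top/(\tilde b_i-\tilde{\bm a}_i^\top\bm c^m)^2$ (Sonnevend's inner ellipsoid is $\{\bm v:(\bm v-\bm c^m)^\top\bm H(\bm v-\bm c^m)\le1\}$), and let $\bm v_1^m,\bm v_2^m\in\mathcal V^{m-1}$ be the two points (in some fixed order) where the line through $\bm c^m$ in the direction of the longest axis of this ellipsoid meets the boundary of $\mathcal V^{m-1}$. *)

From HB Require Import structures.
From mathcomp Require Import all_boot all_order all_algebra.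
From mathcomp Require Import all_classical all_reals all_analysis.
Set Implicit Arguments. Unset Strict Implicit. Unset Printing Implicit Defensive.
Import Order.TTheory GRing.Theory Num.Theory.
Local Open Scope ring_scope.

(* Conventions: N = n.+2 (so N >= 3 iff 0 < n); the grid points
   x_1 < ... < x_N are [xs : 'I_n.+2 -> R] (0-indexed);
   vectors of R^(N-1) are ['I_n.+1 -> R], vectors of R^(N-2) are ['I_n -> R];
   m - 1 = k, the past data are indexed by ['I_k]. *)

Section Defs.
Variable R : realType.
Variable n : nat.
Variable xs : 'I_n.+2 -> R.

Definition xlo : R := xs ord0.
Definition xhi : R := xs ord_max.

(* This is the paper's
   piecewise definition written entrywise (g(x_1) = 0 included). *)
Definition gfun (x : R) (j : 'I_n.+1) : R :=
  let a := xs (widen_ord (leqnSn n.+1) j) in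
  let b := xs (lift ord0 j) in
  if x <= a then 0 else if b <= x then 1 else (x - a) / (b - a).

Definition Rop (v : 'I_n -> R) (j : 'I_n.+1) : R :=
  if unlift ord_max j is Some j' then v j' else 1 - \sum_i v i.

Definition dot (u w : 'I_n.+1 -> R) : R := \sum_j u j * w j.
Definition dotn (u w : 'I_n -> R) : R := \sum_j u j * w j.

Definition GA (r1 r3 p : R) (j : 'I_n.+1) : R :=
  (1 - p) * gfun r1 j + p * gfun r3 j.
Definition GB (r2 : R) (j : 'I_n.+1) : R := gfun r2 j.

Definition inI (x : R) : Prop := xlo <= x <= xhi.
Definition inF (r1 r3 p : R) : Prop :=
  [/\ inI r1, inI r3, 0 <= p <= 1 & r1 <= r3].

Variable k : nat.
Variables (r1d r3d pd r2d ld : 'I_k -> R).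

Definition wdat (q : 'I_k) (j : 'I_n.+1) : R :=
  GA (r1d q) (r3d q) (pd q) j - GB (r2d q) j.

Definition inV (v : 'I_n -> R) : Prop :=
  [/\ forall i, 0 <= v i, \sum_i v i <= 1 &
      forall q, ld q * dot (Rop v) (wdat q) <= 0].

(* its defining inequalities  atil t ^T v <= btil t, indexed by
   'I_n (v_i >= 0), unit (e^T v <= 1), 'I_k (data constraints).
   Since (R v)^T w = w_N + sum_j v_j (w_j - w_N), the data constraint
   l (R v)^T w <= 0 reads  (l (w_j - w_N))_j ^T v <= - l w_N. *)
Definition Idx : finType := ('I_n + (unit + 'I_k))%type.

Definition atil (t : Idx) : 'I_n -> R :=
  match t with
  | inl i => fun j => - (i == j)%:R
  | inr (inl _) => fun _ => 1
  | inr (inr q) => fun j =>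
      ld q * (wdat q (widen_ord (leqnSn n) j) - wdat q ord_max)
  end.

Definition btil (t : Idx) : R :=
  match t with
  | inl _ => 0
  | inr (inl _) => 1
  | inr (inr q) => - (ld q * wdat q ord_max)
  end.

Definition slack (t : Idx) (v : 'I_n -> R) : R := btil t - dotn (atil t) v.

Definition inVint (v : 'I_n -> R) : Prop := forall t, 0 < slack t v.

Definition barrier (v : 'I_n -> R) : R := \sum_t ln (slack t v).

Definition analytic_center (c : 'I_n -> R) : Prop :=
  inVint c /\ forall v, inVint v -> barrier v <= barrier c.

Definition Hmat (c : 'I_n -> R) (i j : 'I_n) : R :=
  \sum_t atil t i * atil t j / (slack t c) ^+ 2.

Definition eigenpair (H : 'I_n -> 'I_n -> R) (mu : R) (u : 'I_n -> R) : Prop :=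
  (exists j, u j != 0) /\ forall i, \sum_j H i j * u j = mu * u i.

(* d spans the longest axis of {v : (v-c)^T H (v-c) <= 1}: an eigenvector
   of H for its smallest eigenvalue (semi-axis lengths are 1/sqrt(eig)). *)
Definition longest_axis_dir (c d : 'I_n -> R) : Prop :=
  exists lam, eigenpair (Hmat c) lam d /\
    forall mu u, eigenpair (Hmat c) mu u -> lam <= mu.

Definition line_pt (c d : 'I_n -> R) (t : R) (i : 'I_n) : R := c i + t * d i.

Definition boundary_pts (c d v1 v2 : 'I_n -> R) : Prop :=
  exists t1 t2, (forall t, inV (line_pt c d t) <-> t1 <= t <= t2) /\
    ((forall i, v1 i = line_pt c d t1 i /\ v2 i = line_pt c d t2 i) \/
     (forall i, v1 i = line_pt c d t2 i /\ v2 i = line_pt c d t1 i)).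

End Defs.

From HB Require Import structures.
From mathcomp Require Import all_boot all_order all_algebra.
From mathcomp Require Import all_classical all_reals all_analysis.
From mathcomp Require Import lra zify.
Set Implicit Arguments. Unset Strict Implicit. Unset Printing Implicit Defensive.
Import Order.TTheory GRing.Theory Num.Theory.
Local Open Scope ring_scope.

(* Interior points of V have all coordinates of R v positive, so for the
   analytic center c the map phi x := (R c)^T g(x) is strictly increasing on
   [x_lo, x_hi]: every g_j is a nondecreasing ramp, and the ramp of the cell
   containing x strictly increases there.  Since (R c)^T G_A(r1, r3, p) is the
   convex combination (1 - p) phi r1 + p phi r3 with phi r1 <= phi r3, the two
   equality constraints give phi r1 <= phi r2 = D <= phi r3, whence
   r1 <= r2 <= r3.  Neither optimality (S_A, S_B) nor the ellipsoid enters. *)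

Section Grid.
Variables (R : realType) (n : nat) (xs : 'I_n.+2 -> R).
Hypothesis xs_incr : forall i j : 'I_n.+2, (i < j)%N -> xs i < xs j.

Local Notation lo j := (xs (widen_ord (leqnSn n.+1) j)).
Local Notation hi j := (xs (lift ord0 j)).

Lemma grid_cell_lt (j : 'I_n.+1) : lo j < hi j.
Proof. by apply: xs_incr; rewrite /= /bump /= add1n. Qed.

Lemma grid_cell_mem x : xlo xs < x -> x <= xhi xs ->
  exists j : 'I_n.+1, lo j < x <= hi j.
Proof.
move=> lox xhix.
have inord_max : inord n.+1 = ord_max :> 'I_n.+2 by apply: val_inj; rewrite /= inordK.
have hiP : exists m, x <= xs (inord m) by exists n.+1; rewrite inord_max.
case: (ex_minnP hiP) => m xm m_min.
have m_gt0 : (0 < m)%N.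
  rewrite lt0n; apply: contraTneq xm => ->; rewrite -ltNge.
  by rewrite (_ : inord 0 = ord0) //; apply: val_inj; rewrite /= inordK.
have m_le : (m <= n.+1)%N by apply: m_min; rewrite inord_max.
pose j : 'I_n.+1 := inord m.-1; exists j.
have j_val : val j = m.-1 by rewrite /= inordK //; lia.
have -> : widen_ord (leqnSn n.+1) j = inord m.-1.
  by apply: val_inj; rewrite /= inordK ?j_val //; lia.
have -> : lift ord0 j = inord m.
  by apply: val_inj; rewrite /= /bump /= add1n inordK ?j_val; lia.
rewrite xm andbT ltNge; apply/negP => /m_min; lia.
Qed.

Lemma gfun_nondecr j : {homo gfun xs ^~ j : x y / x <= y}.
Proof.
move=> x y xy; have ab := grid_cell_lt j; rewrite /gfun.
set a := xs _ in ab *; set b := xs _ in ab *.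
have ba : 0 < b - a by rewrite subr_gt0.
case: (leP x a) => xa; case: (leP y a) => ya; case: (leP b x) => bx; case: (leP b y) => by_ //;
  rewrite ?ler_pdivlMr ?ler_pdivrMr ?divr_ge0 ?mul0r ?mul1r //; try lra.
rewrite divfK ?gt_eqF //; lra.
Qed.

Lemma gfun_lt_in_cell j x y : lo j < x <= hi j -> y < x ->
  gfun xs y j < gfun xs x j.
Proof.
move=> /andP[ax xb] yx; have ab := grid_cell_lt j; rewrite /gfun.
set a := xs _ in ab ax xb *; set b := xs _ in ab ax xb *.
have ba : 0 < b - a by rewrite subr_gt0.
case: (leP x a) => xa; case: (leP y a) => ya; case: (leP b x) => bx; case: (leP b y) => by_ //;
  rewrite ?ltr_pdivlMr ?ltr_pdivrMr ?divr_gt0 ?mul0r ?mul1r ?subr_gt0 //; try lra.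
rewrite divfK ?gt_eqF //; lra.
Qed.

End Grid.

Section Weighted.
Variables (R : realType) (n : nat) (xs : 'I_n.+2 -> R).
Hypothesis xs_incr : forall i j : 'I_n.+2, (i < j)%N -> xs i < xs j.
Variable w : 'I_n.+1 -> R.
Hypothesis w_gt0 : forall j, 0 < w j.

Lemma dot_GB_nondecr : {homo (fun x => dot w (GB xs x)) : x y / x <= y}.
Proof.
move=> x y xy; apply: ler_sum => j _.
by rewrite ler_pM2l ?gfun_nondecr.
Qed.

Lemma dot_GB_lt x y : xlo xs <= y -> y < x -> x <= xhi xs ->
  dot w (GB xs y) < dot w (GB xs x).
Proof.
move=> loy yx xhix.
have [j cell_j] := grid_cell_mem (le_lt_trans loy yx) xhix.
rewrite /dot (bigD1 j) //= [X in _ < X](bigD1 j) //=.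
apply: ltr_leD; first by rewrite ltr_pM2l // gfun_lt_in_cell.
by apply: ler_sum => i _; rewrite ler_pM2l // gfun_nondecr // ltW.
Qed.

Lemma le_of_dot_GB_le x y : inI xs x -> inI xs y ->
  dot w (GB xs x) <= dot w (GB xs y) -> x <= y.
Proof.
move=> /andP[lox xhix] /andP[loy yhiy]; rewrite !leNgt; apply: contra.
by move=> yx; apply: dot_GB_lt.
Qed.

End Weighted.

Lemma dot_GA (R : realType) (n : nat) (xs : 'I_n.+2 -> R) w r1 r3 p :
  dot w (GA xs r1 r3 p) = line_path (dot w (GB xs r1)) (dot w (GB xs r3)) p.
Proof.
rewrite /line_path /dot /GA /GB !mulr_sumr -big_split.
by apply: eq_bigr => j _; rewrite mulrDr !mulrA ![w j * _]mulrC.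
Qed.

Lemma line_path_between (R : numDomainType) (a b t : R) :
  a <= b -> 0 <= t <= 1 -> a <= line_path a b t <= b.
Proof.
move=> ab /andP[t0 t1].
apply/andP; split.
  by rewrite -[X in X <= _](line_path0 a b); apply: leW_line_path.
by rewrite -[X in _ <= X](line_path1 a b); apply: leW_line_path.
Qed.

Lemma Rop_gt0 (R : realType) (n : nat) (xs : 'I_n.+2 -> R) (k : nat)
  (r1d r3d pd r2d ld : 'I_k -> R) v :
  inVint xs r1d r3d pd r2d ld v -> forall j, 0 < Rop v j.
Proof.
move=> v_int j; rewrite /Rop; case: unliftP => [i _|_].
  have := v_int (inl i); rewrite /slack /btil /atil /dotn sub0r.
  rewrite (bigD1 i) //= eqxx big1 ?addr0 ?mulN1r ?opprK //.
  by move=> l /negbTE il; rewrite eq_sym il oppr0 mul0r.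
have := v_int (inr (inl tt)); rewrite /slack /btil /atil /dotn.
by under eq_bigr do rewrite mul1r.
Qed.

Theorem proposition7 (R : realType) (n : nat) (xs : 'I_n.+2 -> R)
  (k : nat) (r1d r3d pd r2d ld : 'I_k -> R)
  (c d v1 v2 : 'I_n -> R) (D r1 r3 p r2 : R) :
  (0 < n)%N ->
  (forall i j : 'I_n.+2, (i < j)%N -> xs i < xs j) ->
  (forall q, inF xs (r1d q) (r3d q) (pd q)) ->
  (forall q, inI xs (r2d q)) ->
  (forall q, ld q = 1 \/ ld q = -1) ->
  (exists v, inVint xs r1d r3d pd r2d ld v) ->
  analytic_center xs r1d r3d pd r2d ld c ->
  longest_axis_dir xs r1d r3d pd r2d ld c d ->
  boundary_pts xs r1d r3d pd r2d ld c d v1 v2 ->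
  0 < D <= 1 ->
  (* (r1, r3, p) in S_A /\ F_A^= *)
  inF xs r1 r3 p ->
  dot (Rop c) (GA xs r1 r3 p) = D ->
  (forall s1 s3 q, inF xs s1 s3 q -> dot (Rop c) (GA xs s1 s3 q) <= D ->
     dot (Rop v2) (GA xs s1 s3 q) <= dot (Rop v2) (GA xs r1 r3 p)) ->
  (* r2 in S_B /\ F_B^= *)
  inI xs r2 ->
  dot (Rop c) (GB xs r2) = D ->
  (forall s2, inI xs s2 -> dot (Rop c) (GB xs s2) <= D ->
     dot (Rop v1) (GB xs s2) <= dot (Rop v1) (GB xs r2)) ->
  r1 <= r2 <= r3.
Proof.
move=> _ xs_incr _ _ _ _ [c_int _] _ _ _ [r1I r3I p01 r13] eqA _ r2I eqB _.
have c_gt0 := Rop_gt0 c_int.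
have := line_path_between (dot_GB_nondecr xs_incr c_gt0 r13) p01.
rewrite -dot_GA eqA -eqB => /andP[le12 le23].
by apply/andP; split; apply: (le_of_dot_GB_le xs_incr c_gt0).
Qed.
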